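(* Let the data be orthogonally separable. Then there exists $\zeta\in(0,1)$ such that for every $k\in[K]$ and every $w\in\mathbb{R}^D\setminus\{0\}$ with $0<|\mathcal I_k^w|<|\mathcal I_k|$, $$\Big\|\sum_{i\in\mathcal I_k^w}x_i\Big\|^2-\big(\mathcal A_k^w\big)^2\ge\mu_sX_{\min}^2\,\zeta.$$
   Context: Data: $x_1,\dots,x_n\in\mathbb{R}^D\setminus\{0\}$ partitioned into classes with index sets $\mathcal I_1,\dots,\mathcal I_K$; $X_{\min}=\min_i\|x_i\|$. Orthogonal separability: there exist $\mu_s\in(0,1]$ and $\mu_d>0$ such that $\langle x_i,x_j\rangle\ge\mu_s\|x_i\|\|x_j\|$ whenever $i,j$ lie in the same class and $\langle x_i,x_j\rangle\le-\mu_d\|x_i\|\|x_j\|$ whenever they lie in different classes. For $w\ne0$: $\mathcal I_k^w=\{i\in\mathcal I_k:\langle x_i,w\rangle>0\}$ and $\mathcal A_k^w=\sum_{i\in\mathcal I_k^w}\langle x_i,w/\|w\|\rangle$. *)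

From HB Require Import structures.
From mathcomp Require Import all_boot all_order all_algebra.
From mathcomp Require Import reals.
Set Implicit Arguments. Unset Strict Implicit. Unset Printing Implicit Defensive.
Import Order.TTheory GRing.Theory Num.Theory.
Local Open Scope ring_scope.

Definition dotp (R : realType) (D : nat) (u v : 'rV[R]_D) : R :=
  \sum_(j < D) u 0 j * v 0 j.

Definition enorm (R : realType) (D : nat) (v : 'rV[R]_D) : R :=
  Num.sqrt (dotp v v).

(* X_min = min_i ||x_i||  (the inner max only serves as a neutral element;
   for n = 0 the value is 0, which is irrelevant). *)
Definition Xmax (R : realType) (D n : nat) (x : 'I_n -> 'rV[R]_D) : R :=
  \big[Order.max/0]_(i < n) enorm (x i).
Definition Xmin (R : realType) (D n : nat) (x : 'I_n -> 'rV[R]_D) : R :=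
  \big[Order.min/Xmax x]_(i < n) enorm (x i).

Definition Icls (n K : nat) (cls : 'I_n -> 'I_K) (k : 'I_K) : {set 'I_n} :=
  [set i | cls i == k].

Definition Iw (R : realType) (D n K : nat) (x : 'I_n -> 'rV[R]_D)
  (cls : 'I_n -> 'I_K) (k : 'I_K) (w : 'rV[R]_D) : {set 'I_n} :=
  [set i | (cls i == k) && (0 < dotp (x i) w)].

Definition Aw (R : realType) (D n K : nat) (x : 'I_n -> 'rV[R]_D)
  (cls : 'I_n -> 'I_K) (k : 'I_K) (w : 'rV[R]_D) : R :=
  \sum_(i in Iw x cls k w) dotp (x i) ((enorm w)^-1 *: w).

Definition orth_separable (R : realType) (D n K : nat) (x : 'I_n -> 'rV[R]_D)
  (cls : 'I_n -> 'I_K) (mus mud : R) : Prop :=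
  0 < mus /\ mus <= 1 /\ 0 < mud /\
  (forall i j, cls i = cls j -> dotp (x i) (x j) >= mus * enorm (x i) * enorm (x j)) /\
  (forall i j, cls i <> cls j -> dotp (x i) (x j) <= - mud * enorm (x i) * enorm (x j)).

From HB Require Import structures.
From mathcomp Require Import all_boot all_order all_algebra.
From mathcomp Require Import reals.
From mathcomp Require Import ring lra.
Import Order.TTheory GRing.Theory Num.Theory.
Local Open Scope ring_scope.

(** Let [s] be the sum of the class-[k] points on the positive side of [w], and
    [x_j] a class-[k] point on the other side. The left-hand side is the squared
    norm of the component [p] of [s] orthogonal to [w]. Since [<s,w> >= 0 >= <x_j,w>],
    removing the [w]-component can only increase the inner product with [x_j], so
    [<p,x_j> >= <s,x_j> >= mu_s X_min |x_j|], and Cauchy-Schwarz gives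
    [|p|^2 >= mu_s^2 X_min^2]; any [zeta <= mu_s] then works, e.g. [zeta = mu_s/2]. *)

Set Implicit Arguments. Unset Strict Implicit.

Section InnerProduct.
Variables (R : realType) (D : nat).
Implicit Types u v w : 'rV[R]_D.

Lemma dotpC u v : dotp u v = dotp v u.
Proof. by apply: eq_bigr => j _; rewrite mulrC. Qed.

Lemma dotpDl u v w : dotp (u + v) w = dotp u w + dotp v w.
Proof. by rewrite /dotp -big_split; apply: eq_bigr => j _; rewrite mxE mulrDl. Qed.

Lemma dotpZl a u w : dotp (a *: u) w = a * dotp u w.
Proof. by rewrite /dotp mulr_sumr; apply: eq_bigr => j _; rewrite mxE mulrA. Qed.

Lemma dotpNl u w : dotp (- u) w = - dotp u w.
Proof. by rewrite -scaleN1r dotpZl mulN1r. Qed.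

Lemma dotpBl u v w : dotp (u - v) w = dotp u w - dotp v w.
Proof. by rewrite dotpDl dotpNl. Qed.

Lemma dotpZr a u w : dotp w (a *: u) = a * dotp w u.
Proof. by rewrite ![dotp w _]dotpC dotpZl. Qed.

Lemma dotpBr u v w : dotp w (u - v) = dotp w u - dotp w v.
Proof. by rewrite ![dotp w _]dotpC dotpBl. Qed.

Lemma dotp0l w : dotp 0 w = 0.
Proof. by rewrite -(scale0r 0) dotpZl mul0r. Qed.

Lemma dotp_suml (I : finType) (A : {pred I}) (f : I -> 'rV[R]_D) w :
  dotp (\sum_(i in A) f i) w = \sum_(i in A) dotp (f i) w.
Proof. by apply: (big_morph (fun u => dotp u w)) => [u v|]; rewrite ?dotpDl ?dotp0l. Qed.

Lemma dotp_ge0 u : 0 <= dotp u u.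
Proof. by apply: sumr_ge0 => j _; rewrite -expr2 sqr_ge0. Qed.

Lemma dotp_eq0 u : (dotp u u == 0) = (u == 0).
Proof.
apply/idP/eqP => [/eqP uu0|->]; last by rewrite dotp0l.
apply/rowP => j; rewrite mxE; apply/eqP; rewrite -sqrf_eq0 expr2.
by apply/eqP/(psumr_eq0P _ uu0) => // i _; rewrite -expr2 sqr_ge0.
Qed.

Lemma dotp_gt0 u : (0 < dotp u u) = (u != 0).
Proof. by rewrite lt_def dotp_ge0 dotp_eq0 andbT. Qed.

Lemma enorm_ge0 u : 0 <= enorm u.
Proof. exact: sqrtr_ge0. Qed.

Lemma enorm_sq u : enorm u ^+ 2 = dotp u u.
Proof. by rewrite sqr_sqrtr // dotp_ge0. Qed.

Lemma Cauchy_Schwarz u v : dotp u v ^+ 2 <= dotp u u * dotp v v.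
Proof.
have [-> | vnz] := eqVneq v 0; first by rewrite dotpC !dotp0l expr0n mulr0.
have vv0 : 0 < dotp v v by rewrite dotp_gt0.
have := dotp_ge0 (dotp v v *: u - dotp u v *: v).
rewrite !(dotpBl, dotpBr, dotpZl, dotpZr) [dotp v u]dotpC => h.
by rewrite -(ler_pM2l vv0); nra.
Qed.

Definition rejection w u := u - (dotp u w / dotp w w) *: w.

Lemma dotp_rejection_self w u : w != 0 ->
  dotp (rejection w u) (rejection w u) = dotp u u - dotp u w ^+ 2 / dotp w w.
Proof.
rewrite -dotp_gt0 => ww0.
rewrite /rejection !(dotpBl, dotpBr, dotpZl, dotpZr) [dotp w u]dotpC.
by field; rewrite gt_eqF.
Qed.

Lemma dotp_rejection w u v :
  dotp (rejection w u) v = dotp u v - dotp u w / dotp w w * dotp w v.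
Proof. by rewrite /rejection dotpBl dotpZl. Qed.

Lemma dotp_le_dotp_rejection w u v :
  0 <= dotp u w -> dotp v w <= 0 -> dotp u v <= dotp (rejection w u) v.
Proof.
move=> uw vw; rewrite dotp_rejection [dotp w v]dotpC.
have : dotp u w / dotp w w * dotp v w <= 0 by rewrite mulr_ge0_le0 // divr_ge0 ?dotp_ge0.
lra.
Qed.

Lemma rejection_bound w u v : w != 0 ->
  0 <= dotp u w -> dotp v w <= 0 -> 0 <= dotp u v ->
  dotp u v ^+ 2 <= (dotp u u - dotp u w ^+ 2 / dotp w w) * dotp v v.
Proof.
move=> wnz uw vw uv; rewrite -dotp_rejection_self //.
have le_rej := dotp_le_dotp_rejection uw vw.
apply: le_trans (Cauchy_Schwarz _ _).
by rewrite lerXn2r ?nnegrE // (le_trans uv).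
Qed.

End InnerProduct.

Section OrthSeparable.
Variables (R : realType) (D n K : nat) (x : 'I_n -> 'rV[R]_D).
Variables (cls : 'I_n -> 'I_K) (mus : R).

Lemma Xmin_ge0 : 0 <= Xmin x.
Proof.
have Xmax_ge0 : 0 <= Xmax x.
  by apply: (big_ind (>= 0)) => // [a b a0 _|i _]; rewrite ?le_max ?a0 ?enorm_ge0.
by apply: (big_ind (>= 0)) => // [a b a0 b0|i _]; rewrite ?le_min ?a0 ?b0 ?enorm_ge0.
Qed.

Lemma Xmin_le_enorm i : Xmin x <= enorm (x i).
Proof. exact: bigmin_le. Qed.

Lemma Aw_eq k w : Aw x cls k w = dotp (\sum_(i in Iw x cls k w) x i) w / enorm w.
Proof.
rewrite /Aw dotp_suml mulr_suml; apply: eq_bigr => i _.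
by rewrite dotpZr mulrC.
Qed.

Lemma exists_cls_outside_Iw k w :
  (#|Iw x cls k w| < #|Icls cls k|)%N -> exists2 j, cls j = k & dotp (x j) w <= 0.
Proof.
move=> card_lt; have /subsetPn [j] : ~~ (Icls cls k \subset Iw x cls k w).
  by apply: contraTN card_lt => /subset_leq_card; rewrite leqNgt.
by rewrite !inE => /eqP jk; rewrite jk eqxx /= -leNgt; exists j.
Qed.

Hypothesis x_neq0 : forall i, x i != 0.
Hypothesis mus_ge0 : 0 <= mus.
Hypothesis same_cls_dotp :
  forall i j, cls i = cls j -> mus * enorm (x i) * enorm (x j) <= dotp (x i) (x j).

Lemma dotp_sum_same_cls (A : {pred 'I_n}) i0 j :
  i0 \in A -> {in A, forall i, cls i = cls j} ->
  mus * enorm (x i0) * enorm (x j) <= dotp (\sum_(i in A) x i) (x j).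
Proof.
move=> i0A Acls; rewrite dotp_suml (bigD1 i0) //=.
apply: le_trans (same_cls_dotp (Acls i0 i0A)) _; rewrite lerDl.
apply: sumr_ge0 => i /andP [iA _]; apply: le_trans (same_cls_dotp (Acls i iA)).
by rewrite !mulr_ge0 ?enorm_ge0.
Qed.

Lemma residual_lower_bound k w : w != 0 ->
  (0 < #|Iw x cls k w|)%N -> (#|Iw x cls k w| < #|Icls cls k|)%N ->
  (mus * Xmin x) ^+ 2 <=
    enorm (\sum_(i in Iw x cls k w) x i) ^+ 2 - Aw x cls k w ^+ 2.
Proof.
move=> wnz /card_gt0P [i0 i0S] /exists_cls_outside_Iw [j jk jw].
set s := \sum_(i in Iw x cls k w) x i.
have S_cls : {in Iw x cls k w, forall i, cls i = cls j}.
  by move=> i; rewrite !inE jk => /andP [/eqP].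
have sw : 0 <= dotp s w.
  by rewrite dotp_suml; apply: sumr_ge0 => i; rewrite inE => /andP [_ /ltW].
have m_le_sxj : mus * Xmin x * enorm (x j) <= dotp s (x j).
  apply: le_trans (dotp_sum_same_cls i0S S_cls).
  by rewrite ler_wpM2r ?enorm_ge0 // ler_wpM2l // Xmin_le_enorm.
have m_ge0 : 0 <= mus * Xmin x * enorm (x j) by rewrite !mulr_ge0 ?Xmin_ge0 ?enorm_ge0.
have bound := rejection_bound wnz sw jw (le_trans m_ge0 m_le_sxj).
have xjxj : 0 < dotp (x j) (x j) by rewrite dotp_gt0.
rewrite Aw_eq expr_div_n !enorm_sq -(ler_pM2r xjxj).
apply: le_trans bound; rewrite -enorm_sq -exprMn.
by rewrite lerXn2r ?nnegrE // (le_trans m_ge0).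
Qed.

End OrthSeparable.

Theorem mainTheorem11 (R : realType) (D n K : nat) (x : 'I_n -> 'rV[R]_D)
  (cls : 'I_n -> 'I_K) (mus mud : R) :
  (forall i, x i != 0) ->
  orth_separable x cls mus mud ->
  exists zeta : R, 0 < zeta /\ zeta < 1 /\
    forall (k : 'I_K) (w : 'rV[R]_D), w != 0 ->
      (0 < #|Iw x cls k w|)%N -> (#|Iw x cls k w| < #|Icls cls k|)%N ->
      enorm (\sum_(i in Iw x cls k w) x i) ^+ 2 - (Aw x cls k w) ^+ 2
        >= mus * (Xmin x) ^+ 2 * zeta.
Proof.
move=> x_neq0 [mus_gt0 [mus_le1 [_ [same_cls _]]]].
exists (mus / 2); do 2![split; first by lra].
move=> k w w_neq0 card_gt0 card_lt.
apply: le_trans (residual_lower_bound x_neq0 (ltW mus_gt0) same_cls w_neq0 card_gt0 card_lt).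
have -> : mus * Xmin x ^+ 2 * (mus / 2) = (mus * Xmin x) ^+ 2 / 2 by ring.
by have := sqr_ge0 (mus * Xmin x); lra.
Qed.
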